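(* Let $N\ge3$, $\lambda\in\mathbb R$, and let $\mathbf P$, $V$ be as defined below. For each bijection $\sigma$ of the set of leg labels $\{b,c,d\}$ onto itself, define the elementary melon amplitude $$A^{\sigma}_{x,y}=\frac{\lambda^2}{N^3}\sum \mathbf P_{x,a}\,\mathbf P_{y,a'}\,V_{a,b,c,d}\,V_{a',b',c',d'}\,\mathbf P_{b,\sigma(b)'}\,\mathbf P_{c,\sigma(c)'}\,\mathbf P_{d,\sigma(d)'},$$ summing over all multi-indices $a,b,c,d,a',b',c',d'\in\{1,\dots,N\}^3$ (here $\sigma(b)'$ denotes the primed multi-index with label $\sigma(b)$). Then: (i) if $\sigma$ is the identity or the transposition exchanging $b$ and $d$, $A^\sigma=\lambda^2\frac{8N^6-24N^5-23N^4+58N^3+120N^2-88N-132}{216(N-1)^3N^3}\,\mathbf P$; (ii) for each of the four other bijections, $A^\sigma=\lambda^2\frac{N^6-3N^5+5N^4-58N^3+105N^2+277N-246}{432N^3(N-1)^3}\,\mathbf P$; (iii) consequently $\sum_{\sigma}A^\sigma=\lambda^2 f_M(N)\,\mathbf P$ with $f_M(N)=\frac{N^5-2N^4-4N^3-4N^2+21N+42}{12N^3(N-1)^2}$, and $f_M(N)\to\frac1{12}$ as $N\to\infty$.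
   Context: Multi-indices range over $\{1,\dots,N\}^3$. $\mathbf P$ is the symmetric kernel $\mathbf P_{a,b}=\tfrac13(\delta_{a_1b_1}\delta_{a_2b_2}\delta_{a_3b_3}-\delta_{a_1b_3}\delta_{a_2b_2}\delta_{a_3b_1})+\tfrac16(\delta_{a_1b_2}\delta_{a_2b_1}\delta_{a_3b_3}+\delta_{a_1b_1}\delta_{a_2b_3}\delta_{a_3b_2})-\tfrac16(\delta_{a_1b_2}\delta_{a_2b_3}\delta_{a_3b_1}+\delta_{a_1b_3}\delta_{a_2b_1}\delta_{a_3b_2})+\tfrac1{2(N-1)}(\delta_{a_1b_3}\delta_{a_2a_3}\delta_{b_1b_2}+\delta_{a_1a_2}\delta_{a_3b_1}\delta_{b_2b_3})-\tfrac1{2(N-1)}(\delta_{a_1b_1}\delta_{a_2a_3}\delta_{b_2b_3}+\delta_{a_1a_2}\delta_{a_3b_3}\delta_{b_1b_2})$ (orthogonal projector onto traceless tensors with mixed symmetry of Young tableau with rows $\{1,2\},\{3\}$). The vertex kernel is $V_{a,b,c,d}=\delta_{a_3b_1}\delta_{b_3c_1}\delta_{c_3d_1}\delta_{d_3a_1}\delta_{a_2c_2}\delta_{b_2d_2}$ with legs in cyclic order $a,b,c,d$. The six amplitudes $A^\sigma$ are the six elementary melon two-point maps (two vertices, external legs on different vertices, the remaining three legs of one vertex paired with the remaining three of the other) arising at order $\lambda^2$ in the two-point function of the model with interaction $\frac{\lambda}{4N^{3/2}}\sum V_{a,b,c,d}T_aT_bT_cT_d$ and covariance $\mathbf P$.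 *)

From HB Require Import structures.
From mathcomp Require Import all_boot all_order all_algebra all_fingroup.
Set Implicit Arguments. Unset Strict Implicit. Unset Printing Implicit Defensive.
Import Order.TTheory GRing.Theory Num.Theory.
Local Open Scope ring_scope.

(* Multi-indices in {1..N}^3, represented with components in 'I_N
   (i.e. {0..N-1}); a = ((a_1, a_2), a_3). *)
Notation midx N := (('I_N * 'I_N) * 'I_N)%type.

Definition c1 {N} (a : midx N) : 'I_N := a.1.1.
Definition c2 {N} (a : midx N) : 'I_N := a.1.2.
Definition c3 {N} (a : midx N) : 'I_N := a.2.

Definition dlt {R : ringType} {N} (i j : 'I_N) : R := (i == j)%:R.

Definition Pker (R : fieldType) (N : nat) (a b : midx N) : R :=
  let d := @dlt R N in
  3^-1 * (d (c1 a) (c1 b) * d (c2 a) (c2 b) * d (c3 a) (c3 b)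
          - d (c1 a) (c3 b) * d (c2 a) (c2 b) * d (c3 a) (c1 b))
  + 6^-1 * (d (c1 a) (c2 b) * d (c2 a) (c1 b) * d (c3 a) (c3 b)
            + d (c1 a) (c1 b) * d (c2 a) (c3 b) * d (c3 a) (c2 b))
  - 6^-1 * (d (c1 a) (c2 b) * d (c2 a) (c3 b) * d (c3 a) (c1 b)
            + d (c1 a) (c3 b) * d (c2 a) (c1 b) * d (c3 a) (c2 b))
  + (2 * (N%:R - 1))^-1 * (d (c1 a) (c3 b) * d (c2 a) (c3 a) * d (c1 b) (c2 b)
                          + d (c1 a) (c2 a) * d (c3 a) (c1 b) * d (c2 b) (c3 b))
  - (2 * (N%:R - 1))^-1 * (d (c1 a) (c1 b) * d (c2 a) (c3 a) * d (c2 b) (c3 b)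
                          + d (c1 a) (c2 a) * d (c3 a) (c3 b) * d (c1 b) (c2 b)).

Definition Vker (R : ringType) (N : nat) (a b c d : midx N) : R :=
  let e := @dlt R N in
  e (c3 a) (c1 b) * e (c3 b) (c1 c) * e (c3 c) (c1 d) * e (c3 d) (c1 a)
  * e (c2 a) (c2 c) * e (c2 b) (c2 d).

Definition legB : 'I_3 := @Ordinal 3 0 isT.
Definition legC : 'I_3 := @Ordinal 3 1 isT.
Definition legD : 'I_3 := @Ordinal 3 2 isT.

Definition leg {N} (b c d : midx N) (l : 'I_3) : midx N :=
  if val l == 0%N then b else if val l == 1%N then c else d.

Definition melonA (R : fieldType) (N : nat) (lam : R) (s : 'S_3)
    (x y : midx N) : R :=
  lam ^+ 2 / (N%:R ^+ 3) *
  \sum_(a : midx N) \sum_(b : midx N) \sum_(c : midx N) \sum_(d : midx N)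
  \sum_(a' : midx N) \sum_(b' : midx N) \sum_(c' : midx N) \sum_(d' : midx N)
    (Pker R x a * Pker R y a' * Vker R a b c d * Vker R a' b' c' d'
     * Pker R b (leg b' c' d' (s legB))
     * Pker R c (leg b' c' d' (s legC))
     * Pker R d (leg b' c' d' (s legD))).

Definition coefI (R : fieldType) (N : nat) : R :=
  let n : R := N%:R in
  (8 * n ^+ 6 - 24 * n ^+ 5 - 23 * n ^+ 4 + 58 * n ^+ 3 + 120 * n ^+ 2 - 88 * n - 132)
  / (216 * (n - 1) ^+ 3 * n ^+ 3).

Definition coefII (R : fieldType) (N : nat) : R :=
  let n : R := N%:R in
  (n ^+ 6 - 3 * n ^+ 5 + 5 * n ^+ 4 - 58 * n ^+ 3 + 105 * n ^+ 2 + 277 * n - 246)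
  / (432 * n ^+ 3 * (n - 1) ^+ 3).

Definition fM (R : fieldType) (N : nat) : R :=
  let n : R := N%:R in
  (n ^+ 5 - 2 * n ^+ 4 - 4 * n ^+ 3 - 4 * n ^+ 2 + 21 * n + 42)
  / (12 * n ^+ 3 * (n - 1) ^+ 2).

(* Each amplitude is the contraction of a tensor network made of five copies
   of P and two of V.  Once the denominator 12 (N - 1) of P is cleared, every
   tensor is a Z[N]-combination of products of Kronecker deltas between index
   components.  Summing over an index that occurs in a delta substitutes its
   partner for it, and summing over an index occurring in no delta multiplies
   by N, so the contraction is a finite symbolic computation.  It is performed
   by evaluation on delta expressions, through an interpreter proved sound for
   the sums defining the amplitude, and for each of the six bijections returns
   a polynomial multiple of P.  Two bijections give c_I and four give c_II,
   so the sum is (2 c_I + 4 c_II) P = f_M P, and f_M - 1/12 = O(1/N). *)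

From HB Require Import structures.
From mathcomp Require Import all_boot all_order all_algebra all_fingroup.
From Stdlib Require ZArith.
From mathcomp Require Import ssrZ ring lra.
Import Order.TTheory GRing.Theory Num.Theory ssrZ.Instances.
Set Implicit Arguments. Unset Strict Implicit. Unset Printing Implicit Defensive.
Local Open Scope ring_scope.

Notation Z := BinNums.Z.

(** * Integer polynomials in N *)

Definition Zr (R : pzRingType) (z : Z) : R := (int_of_Z z)%:~R.

Lemma ZrD (R : pzRingType) a b : Zr R (BinInt.Z.add a b) = Zr R a + Zr R b.
Proof. by rewrite /Zr (rmorphD int_of_Z a b) intrD. Qed.

Lemma ZrM (R : pzRingType) a b : Zr R (BinInt.Z.mul a b) = Zr R a * Zr R b.
Proof. by rewrite /Zr (rmorphM int_of_Z a b) intrM. Qed.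

Lemma Zr0 (R : pzRingType) : Zr R BinNums.Z0 = 0.
Proof. by []. Qed.

(* Coefficient lists, constant term first, over the binary integers so that
   the contractions below can be run by [vm_compute]. *)
Definition zpoly := seq Z.

Fixpoint zpoly_add (p q : zpoly) : zpoly :=
  match p, q with
  | [::], _ => q
  | _, [::] => p
  | a :: p', b :: q' => BinInt.Z.add a b :: zpoly_add p' q'
  end.

Definition zpoly_scale (a : Z) (p : zpoly) : zpoly := map (BinInt.Z.mul a) p.

Fixpoint zpoly_mul (p q : zpoly) : zpoly :=
  match p with
  | [::] => [::]
  | a :: p' => zpoly_add (zpoly_scale a q) (BinNums.Z0 :: zpoly_mul p' q)
  end.

Definition zpoly_eq0 (p : zpoly) : bool := all (BinInt.Z.eqb^~ BinNums.Z0) p.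

Definition zhorner (R : pzRingType) (n : R) (p : zpoly) : R :=
  foldr (fun a acc => Zr R a + n * acc) 0 p.

Section ZpolyEval.
Variables (R : comPzRingType) (n : R).

Lemma zhorner_add p q : zhorner n (zpoly_add p q) = zhorner n p + zhorner n q.
Proof.
elim: p q => [|a p IH] [|b q] /=; rewrite ?add0r ?addr0 //.
by rewrite IH ZrD; ring.
Qed.

Lemma zhorner_scale a p : zhorner n (zpoly_scale a p) = Zr R a * zhorner n p.
Proof. by elim: p => [|b p IH] /=; rewrite ?mulr0 // IH ZrM; ring. Qed.

Lemma zhorner_mul p q : zhorner n (zpoly_mul p q) = zhorner n p * zhorner n q.
Proof.
elim: p => [|a p IH] /=; first by rewrite mul0r.
by rewrite zhorner_add zhorner_scale /= Zr0 IH; ring.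
Qed.

Lemma zhorner_eq0 p : zpoly_eq0 p -> zhorner n p = 0.
Proof.
elim: p => [|a p IH] //= /andP[/BinInt.Z.eqb_eq -> /IH ->].
by rewrite Zr0 mulr0 addr0.
Qed.

End ZpolyEval.

(** * Sums of products of Kronecker deltas *)

(* Index variables are natural numbers; a monomial is a polynomial in N times
   a product of deltas [rho i = rho j], one for each pair (i, j) of its list. *)
Definition delta_list := seq (nat * nat).
Definition dmon := (zpoly * delta_list)%type.
Definition dexpr := seq dmon.

Lemma natr_andb (R : pzSemiRingType) (a b : bool) : ((a && b)%:R : R) = a%:R * b%:R.
Proof. by rewrite -natrM mulnb. Qed.

Section DeltaValue.
Variables (R : comPzRingType) (N : nat).
Implicit Types (rho : nat -> 'I_N) (es : delta_list) (m : dmon) (p q : dexpr).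

Definition deltas_hold rho es : bool := all (fun e => rho e.1 == rho e.2) es.

Definition dmon_val m rho : R := zhorner (N%:R : R) m.1 * (deltas_hold rho m.2)%:R.

Definition dexpr_val p rho : R := \sum_(m <- p) dmon_val m rho.

Lemma dexpr_val_cons m p rho :
  dexpr_val (m :: p) rho = dmon_val m rho + dexpr_val p rho.
Proof. exact: big_cons. Qed.

Definition dexpr_mul p q : dexpr :=
  [seq (zpoly_mul m1.1 m2.1, m1.2 ++ m2.2) | m1 <- p, m2 <- q].

Lemma dexpr_val_mul p q rho :
  dexpr_val (dexpr_mul p q) rho = dexpr_val p rho * dexpr_val q rho.
Proof.
rewrite /dexpr_val big_allpairs_dep big_distrl /=; apply: eq_bigr => m1 _.
rewrite big_distrr /=; apply: eq_bigr => m2 _.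
rewrite /dmon_val /deltas_hold /= all_cat zhorner_mul natr_andb; ring.
Qed.

End DeltaValue.

Definition setv N (rho : nat -> 'I_N) (v : nat) (j : 'I_N) : nat -> 'I_N :=
  fun w => if w == v then j else rho w.

Fixpoint delta_partner (v : nat) (es : delta_list) : option nat :=
  match es with
  | [::] => None
  | e :: es' =>
    if (e.1 == v) && (e.2 != v) then Some e.2
    else if (e.2 == v) && (e.1 != v) then Some e.1
    else delta_partner v es'
  end.

Lemma delta_partner_None v es : delta_partner v es = None ->
  forall e, e \in es -> (e.1 == v) = (e.2 == v).
Proof.
elim: es => [|f es IH] //=.
case: ifP => // /negbT H1; case: ifP => // /negbT H2 /IH Hes e.
rewrite inE => /orP[/eqP ->|/Hes //].
by move: H1 H2; rewrite !negb_and !negbK; case: (f.1 == v); case: (f.2 == v).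
Qed.

Lemma delta_partner_Some v es u : delta_partner v es = Some u ->
  u != v /\ exists2 e, e \in es &
    ((e.1 == v) && (e.2 == u)) || ((e.2 == v) && (e.1 == u)).
Proof.
elim: es => [|f es IH] //=.
case: ifP => [/andP[H1 H2] [<-]|_].
  by split => //; exists f; rewrite ?mem_head // H1 eqxx.
case: ifP => [/andP[H1 H2] [<-]|_].
  by split => //; exists f; rewrite ?mem_head // H1 eqxx orbT.
by move/IH => [Hu [e He He2]]; split => //; exists e => //; rewrite inE He orbT.
Qed.

Definition subst_var (v u w : nat) : nat := if w == v then u else w.

(* Summing over [v] either substitutes a delta partner of [v] for [v], or,
   when [v] occurs in no nontrivial delta, multiplies by N. *)
Definition dmon_sum_out (v : nat) (m : dmon) : dmon :=
  match delta_partner v m.2 with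
  | Some u => (m.1, [seq (subst_var v u e.1, subst_var v u e.2) | e <- m.2])
  | None => (BinNums.Z0 :: m.1, m.2)
  end.

Lemma sum_dmon_val_setv (R : comPzRingType) N (m : dmon) v (rho : nat -> 'I_N) :
  \sum_(j : 'I_N) dmon_val R m (setv rho v j) = dmon_val R (dmon_sum_out v m) rho.
Proof.
rewrite /dmon_sum_out /dmon_val; case: m => c es /=.
case Hp: (delta_partner v es) => [u|].
- have [Huv [e He Hev]] := delta_partner_Some Hp.
  have forced j : deltas_hold (setv rho v j) es -> j = rho u.
    move=> /allP /(_ e He); rewrite /setv.
    case: e He Hev => e1 e2 /= _.
    case/orP => /andP[/eqP E1 /eqP E2]; subst e1 e2;
      rewrite eqxx (negbTE Huv) => /eqP //; exact: esym.
  rewrite (bigD1 (rho u)) //= big1 ?addr0; last first.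
    move=> j /negPf Hj; case Hd: (deltas_hold _ _); last by rewrite mulr0.
    by move: Hj; rewrite (forced j Hd) eqxx.
  congr (_ * (_ : bool)%:R); rewrite /deltas_hold all_map; apply: eq_all => f /=.
  by rewrite /setv /subst_var; case: (f.1 == v); case: (f.2 == v).
- have Hn := delta_partner_None Hp.
  have free j : deltas_hold (setv rho v j) es = deltas_hold rho es.
    apply: eq_in_all => f /Hn /=; rewrite /setv.
    by case E1: (f.1 == v); case E2: (f.2 == v) => //= _; rewrite (eqP E1) (eqP E2) !eqxx.
  under eq_bigr do rewrite free.
  by rewrite sumr_const card_ord /= Zr0 add0r -mulr_natl; ring.
Qed.

Fixpoint sum_vars (R : comPzRingType) N (vs : seq nat)
    (F : (nat -> 'I_N) -> R) (rho : nat -> 'I_N) : R :=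
  if vs is v :: vs' then \sum_(j : 'I_N) sum_vars vs' F (setv rho v j) else F rho.

Lemma eq_sum_vars (R : comPzRingType) N vs (F G : (nat -> 'I_N) -> R) rho :
  F =1 G -> sum_vars vs F rho = sum_vars vs G rho.
Proof.
move=> FG; elim: vs rho => [|v vs IH] rho /=; first exact: FG.
by apply: eq_bigr => j _; apply: IH.
Qed.

Definition dexpr_sum_out (vs : seq nat) (p : dexpr) : dexpr :=
  foldr (fun v p => map (dmon_sum_out v) p) p vs.

Lemma sum_vars_dexpr_val (R : comPzRingType) N vs p (rho : nat -> 'I_N) :
  sum_vars vs (dexpr_val R p) rho = dexpr_val R (dexpr_sum_out vs p) rho.
Proof.
elim: vs rho => [|v vs IH] rho //=.
under eq_bigr do rewrite IH.
rewrite /dexpr_val exchange_big /= big_map; apply: eq_bigr => m _.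
exact: sum_dmon_val_setv.
Qed.

Definition orient (e : nat * nat) : nat * nat := if (e.1 <= e.2)%N then e else (e.2, e.1).

Definition pair_lex (e f : nat * nat) : bool :=
  (e.1 < f.1)%N || ((e.1 == f.1) && (e.2 <= f.2)%N).

Definition delta_norm (es : delta_list) : delta_list :=
  sort pair_lex (undup [seq orient e | e <- es & e.1 != e.2]).

Fixpoint delta_lex (s t : delta_list) : bool :=
  match s, t with
  | [::], _ => true
  | _ :: _, [::] => false
  | e :: s', f :: t' => if e == f then delta_lex s' t' else pair_lex e f
  end.

Fixpoint collect_from (acc : dmon) (p : dexpr) : dexpr :=
  if p is m :: p' then
    if acc.2 == m.2 then collect_from (zpoly_add acc.1 m.1, acc.2) p'
    else acc :: collect_from m p'
  else [:: acc].

Definition collect (p : dexpr) : dexpr :=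
  if p is m :: p' then collect_from m p' else [::].

(* Merging monomials with the same normalized delta list keeps the
   intermediate expressions of the contraction small. *)
Definition dexpr_norm (p : dexpr) : dexpr :=
  [seq m <- collect (sort (fun m m' => delta_lex m.2 m'.2)
                          [seq (m.1, delta_norm m.2) | m <- p])
   | ~~ zpoly_eq0 m.1].

Section Normalization.
Variables (R : comPzRingType) (N : nat).
Implicit Types (rho : nat -> 'I_N) (p : dexpr).

Lemma deltas_hold_norm rho es : deltas_hold rho (delta_norm es) = deltas_hold rho es.
Proof.
rewrite /deltas_hold /delta_norm all_sort all_undup all_map all_filter.
apply: eq_all => -[a b] /=; rewrite /orient /=.
by case: (a <= b)%N => /=; case: eqP => [->|] //=; rewrite ?eqxx // eq_sym.
Qed.

Lemma dexpr_val_collect_from acc p rho :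
  dexpr_val R (collect_from acc p) rho = dmon_val R acc rho + dexpr_val R p rho.
Proof.
elim: p acc => [|m p IH] acc /=; first by rewrite /dexpr_val big_seq1 big_nil addr0.
case: ifP => [/eqP E|_]; rewrite !dexpr_val_cons IH // addrA; congr (_ + _).
by case: acc E => c1 es /= ->; rewrite /dmon_val zhorner_add mulrDl.
Qed.

Lemma dexpr_val_norm p rho : dexpr_val R (dexpr_norm p) rho = dexpr_val R p rho.
Proof.
rewrite /dexpr_norm /dexpr_val big_filter big_mkcond /=.
rewrite (eq_bigr (fun m => dmon_val R m rho)); last first.
  move=> m _; case: ifP => // /negbFE /(zhorner_eq0 (N%:R : R)) m0.
  by rewrite /dmon_val m0 mul0r.
have dexpr_val_collect s : dexpr_val R (collect s) rho = dexpr_val R s rho.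
  by case: s => [|m s] //; rewrite /collect dexpr_val_collect_from dexpr_val_cons.
rewrite -/(dexpr_val R _ rho) dexpr_val_collect /dexpr_val.
rewrite (perm_big _ (permEl (perm_sort _ _))) big_map.
by apply: eq_bigr => m _; rewrite /dmon_val /= deltas_hold_norm.
Qed.

End Normalization.

(* [contract q bs p] sums [q * p] over the multi-indices stored at the
   variables b, b+1, b+2 for b in [bs]. *)
Definition blocks (bs : seq nat) : seq nat := flatten [seq [:: b; b.+1; b.+2] | b <- bs].

Definition contract (q : dexpr) (bs : seq nat) (p : dexpr) : dexpr :=
  dexpr_norm (dexpr_sum_out (blocks bs) (dexpr_mul q p)).

Lemma dexpr_val_contract (R : comPzRingType) N q bs p (rho : nat -> 'I_N) :
  dexpr_val R (contract q bs p) rho =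
  sum_vars (blocks bs) (fun r => dexpr_val R q r * dexpr_val R p r) rho.
Proof.
rewrite /contract dexpr_val_norm -sum_vars_dexpr_val; apply: eq_sum_vars => r.
exact: dexpr_val_mul.
Qed.

Definition midx_at N (rho : nat -> 'I_N) (i : nat) : midx N := ((rho i, rho i.+1), rho i.+2).

Definition setm N (rho : nat -> 'I_N) (b : nat) (a : midx N) : nat -> 'I_N :=
  setv (setv (setv rho b a.1.1) b.+1 a.1.2) b.+2 a.2.

Fixpoint sum_midx (R : comPzRingType) N (bs : seq nat)
    (F : (nat -> 'I_N) -> R) (rho : nat -> 'I_N) : R :=
  if bs is b :: bs' then \sum_(a : midx N) sum_midx bs' F (setm rho b a) else F rho.

Lemma sum_midx_vars (R : comPzRingType) N bs (F : (nat -> 'I_N) -> R) rho :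
  sum_midx bs F rho = sum_vars (blocks bs) F rho.
Proof.
elim: bs rho => [|b bs IH] rho //=.
rewrite [RHS]pair_big [RHS]pair_big /=.
by apply: eq_bigr => -[[i j] k] _; rewrite IH.
Qed.

Lemma eq_sum_midx (R : comPzRingType) N bs (F G : (nat -> 'I_N) -> R) rho :
  F =1 G -> sum_midx bs F rho = sum_midx bs G rho.
Proof. by move=> FG; rewrite !sum_midx_vars; apply: eq_sum_vars. Qed.

Lemma dexpr_val_contract_midx (R : comPzRingType) N q bs p (rho : nat -> 'I_N) :
  dexpr_val R (contract q bs p) rho =
  sum_midx bs (fun r => dexpr_val R q r * dexpr_val R p r) rho.
Proof. by rewrite sum_midx_vars dexpr_val_contract. Qed.

Local Open Scope Z_scope.

(* [12 (N - 1) P] between the multi-indices at [i] and [j]; the factor clears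
   the denominators 3, 6 and 2 (N - 1) of P. *)
Definition P_dexpr (i j : nat) : dexpr :=
  let a1 := i in let a2 := i.+1 in let a3 := i.+2 in
  let b1 := j in let b2 := j.+1 in let b3 := j.+2 in
  [:: ([:: -4; 4], [:: (a1, b1); (a2, b2); (a3, b3)]);
      ([:: 4; -4], [:: (a1, b3); (a2, b2); (a3, b1)]);
      ([:: -2; 2], [:: (a1, b2); (a2, b1); (a3, b3)]);
      ([:: -2; 2], [:: (a1, b1); (a2, b3); (a3, b2)]);
      ([:: 2; -2], [:: (a1, b2); (a2, b3); (a3, b1)]);
      ([:: 2; -2], [:: (a1, b3); (a2, b1); (a3, b2)]);
      ([:: 6], [:: (a1, b3); (a2, a3); (b1, b2)]);
      ([:: 6], [:: (a1, a2); (a3, b1); (b2, b3)]);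
      ([:: -6], [:: (a1, b1); (a2, a3); (b2, b3)]);
      ([:: -6], [:: (a1, a2); (a3, b3); (b1, b2)])].

Definition V_dexpr (a b c d : nat) : dexpr :=
  [:: ([:: 1], [:: (a.+2, b); (b.+2, c); (c.+2, d); (d.+2, a); (a.+1, c.+1); (b.+1, d.+1)])].

Definition dexpr1 : dexpr := [:: ([:: 1], [::])].

Local Close Scope Z_scope.

Section KernelValues.
Variables (R : numFieldType) (N : nat) (rho : nat -> 'I_N).

Lemma P_dexprE i j : (N%:R : R) - 1 != 0 ->
  dexpr_val R (P_dexpr i j) rho = 12 * (N%:R - 1) * Pker R (midx_at rho i) (midx_at rho j).
Proof.
move=> N1; rewrite /dexpr_val /P_dexpr !big_cons big_nil /dmon_val /deltas_hold /=.
rewrite !andbT !natr_andb /Zr /= /BinPos.Pos.to_nat /= /Pker /dlt /c1 /c2 /c3 /=.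
by field; rewrite N1.
Qed.

Lemma P_dexpr_legE i (l : 'I_3) : (N%:R : R) - 1 != 0 ->
  dexpr_val R (P_dexpr i (21 + 3 * l)) rho = 12 * (N%:R - 1) *
    Pker R (midx_at rho i) (leg (midx_at rho 21) (midx_at rho 24) (midx_at rho 27) l).
Proof. by move=> N1; rewrite P_dexprE //; case: l => [[|[|[|k]]] Hk]. Qed.

Lemma V_dexprE a b c d :
  dexpr_val R (V_dexpr a b c d) rho =
  Vker R (midx_at rho a) (midx_at rho b) (midx_at rho c) (midx_at rho d).
Proof.
rewrite /dexpr_val big_cons big_nil /dmon_val /deltas_hold /= !andbT !natr_andb.
by rewrite /Vker /dlt /c1 /c2 /c3 /Zr /= /BinPos.Pos.to_nat /=; ring.
Qed.

Lemma dexpr1E : dexpr_val R dexpr1 rho = 1.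
Proof.
by rewrite /dexpr_val big_seq1 /dmon_val /= /Zr /= /BinPos.Pos.to_nat /= mulr0 addr0 mulr1.
Qed.

End KernelValues.

(** * The melon network *)

(* Variable layout: x, y, a, b, c, d, a', b', c', d' occupy the blocks at
   0, 3, 6, ..., 27; the leg label [l] of the primed vertex sits at 21 + 3 l. *)
Definition rho_xy N (x y : midx N) : nat -> 'I_N :=
  nth x.1.1 [:: x.1.1; x.1.2; x.2; y.1.1; y.1.2; y.2].

Definition melon_leaf (p q r : nat) : dexpr :=
  dexpr_mul (V_dexpr 18 21 24 27)
    (dexpr_mul (P_dexpr 9 (21 + 3 * p))
      (dexpr_mul (P_dexpr 12 (21 + 3 * q)) (P_dexpr 15 (21 + 3 * r)))).

Definition melon_dexpr (p q r : nat) : dexpr :=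
  contract (P_dexpr 0 6) [:: 6%N]
    (contract (V_dexpr 6 9 12 15) [:: 9%N; 12%N; 15%N]
      (contract (P_dexpr 3 18) [:: 18%N]
        (contract (melon_leaf p q r) [:: 21%N; 24%N; 27%N] dexpr1))).

Lemma melon_dexprE (R : comPzRingType) N p q r (rho : nat -> 'I_N) :
  dexpr_val R (melon_dexpr p q r) rho =
  sum_midx [:: 6%N] (fun r1 => dexpr_val R (P_dexpr 0 6) r1 *
   sum_midx [:: 9%N; 12%N; 15%N] (fun r2 => dexpr_val R (V_dexpr 6 9 12 15) r2 *
    sum_midx [:: 18%N] (fun r3 => dexpr_val R (P_dexpr 3 18) r3 *
     sum_midx [:: 21%N; 24%N; 27%N] (fun r4 =>
       dexpr_val R (melon_leaf p q r) r4 * dexpr_val R dexpr1 r4) r3) r2) r1) rho.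
Proof.
rewrite dexpr_val_contract_midx; apply: eq_sum_midx => r1; congr (_ * _).
rewrite dexpr_val_contract_midx; apply: eq_sum_midx => r2; congr (_ * _).
rewrite dexpr_val_contract_midx; apply: eq_sum_midx => r3; congr (_ * _).
exact: dexpr_val_contract_midx.
Qed.

Arguments dexpr_val : simpl never.
Arguments midx_at : simpl never.
Arguments setm : simpl never.
Arguments Pker : simpl never.
Arguments Vker : simpl never.
Arguments leg : simpl never.

(* Each of the five copies of P in the network is scaled by 12 (N - 1). *)
Lemma melonA_dexpr (R : numFieldType) N (lam : R) (s : 'S_3) (x y : midx N) :
  (N%:R : R) - 1 != 0 ->
  melonA lam s x y = lam ^+ 2 / N%:R ^+ 3 * ((12 * (N%:R - 1)) ^- 5 *
    dexpr_val R (melon_dexpr (s legB) (s legC) (s legD)) (rho_xy x y)).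
Proof.
move=> N1; rewrite melon_dexprE /melonA; congr (_ * _).
case: x => [[x1 x2] x3]; case: y => [[y1 y2] y3].
move: (s legB) (s legC) (s legD) => l1 l2 l3 /=.
rewrite [in RHS]mulr_sumr; apply: eq_bigr => -[[a1 a2] a3] _; rewrite [in RHS]mulrA.
rewrite [in RHS]mulr_sumr; apply: eq_bigr => -[[b1 b2] b3] _.
rewrite [in RHS]mulr_sumr; apply: eq_bigr => -[[c1 c2] c3] _.
rewrite [in RHS]mulr_sumr; apply: eq_bigr => -[[d1 d2] d3] _; rewrite [in RHS]mulrA.
rewrite [in RHS]mulr_sumr; apply: eq_bigr => -[[e1 e2] e3] _; rewrite [in RHS]mulrA.
rewrite [in RHS]mulr_sumr; apply: eq_bigr => -[[f1 f2] f3] _.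
rewrite [in RHS]mulr_sumr; apply: eq_bigr => -[[g1 g2] g3] _.
rewrite [in RHS]mulr_sumr; apply: eq_bigr => -[[h1 h2] h3] _.
rewrite /melon_leaf (dexpr_val_mul _ (V_dexpr _ _ _ _)) (dexpr_val_mul _ (P_dexpr 9 _)).
rewrite (dexpr_val_mul _ (P_dexpr 12 _)) dexpr1E !V_dexprE.
rewrite (P_dexpr_legE _ 9 l1 N1) (P_dexpr_legE _ 12 l2 N1) (P_dexpr_legE _ 15 l3 N1).
rewrite !P_dexprE //.
by rewrite /midx_at /setm /setv /rho_xy /Vker /=; field; rewrite N1.
Qed.

Definition melon_target (c : zpoly) : dexpr :=
  dexpr_norm [seq (zpoly_mul c m.1, m.2) | m <- P_dexpr 0 3].

Lemma melon_targetE (R : numFieldType) N c (x y : midx N) :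
  (N%:R : R) - 1 != 0 ->
  dexpr_val R (melon_target c) (rho_xy x y) =
  zhorner (N%:R : R) c * (12 * (N%:R - 1) * Pker R x y).
Proof.
move=> N1; rewrite dexpr_val_norm /dexpr_val big_map -/(dexpr_val R _ _).
under eq_bigr do rewrite /dmon_val /= zhorner_mul -mulrA.
by rewrite -mulr_sumr -/(dexpr_val R _ _) P_dexprE //; case: x y => [[? ?] ?] [[? ?] ?].
Qed.

Local Open Scope Z_scope.

Definition coefI_num : zpoly := [:: -132; -88; 120; 58; -23; -24; 8].
Definition coefII_num : zpoly := [:: -246; 277; 105; -58; 5; -3; 1].

(* 96 = 12^4 / 216 and 48 = 12^4 / 432. *)
Definition melon_coefI : zpoly := zpoly_mul coefI_num [:: -96; 96].
Definition melon_coefII : zpoly := zpoly_mul coefII_num [:: -48; 48].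

Local Close Scope Z_scope.

Lemma melon_dexpr_012 : melon_dexpr 0 1 2 = melon_target melon_coefI.
Proof. by vm_compute. Qed.
Lemma melon_dexpr_210 : melon_dexpr 2 1 0 = melon_target melon_coefI.
Proof. by vm_compute. Qed.
Lemma melon_dexpr_021 : melon_dexpr 0 2 1 = melon_target melon_coefII.
Proof. by vm_compute. Qed.
Lemma melon_dexpr_102 : melon_dexpr 1 0 2 = melon_target melon_coefII.
Proof. by vm_compute. Qed.
Lemma melon_dexpr_120 : melon_dexpr 1 2 0 = melon_target melon_coefII.
Proof. by vm_compute. Qed.
Lemma melon_dexpr_201 : melon_dexpr 2 0 1 = melon_target melon_coefII.
Proof. by vm_compute. Qed.

Section Coefficients.
Variables (R : numFieldType) (N : nat).
Hypotheses (N0 : (N%:R : R) != 0) (N1 : (N%:R : R) - 1 != 0).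

Lemma melonA_target (lam : R) (s : 'S_3) (x y : midx N) c :
  melon_dexpr (s legB) (s legC) (s legD) = melon_target c ->
  melonA lam s x y =
  lam ^+ 2 * (zhorner (N%:R : R) c / (N%:R ^+ 3 * (12 * (N%:R - 1)) ^+ 4)) * Pker R x y.
Proof.
move=> sc; rewrite (melonA_dexpr lam s x y N1) sc (melon_targetE c x y N1).
by field; rewrite N0 N1.
Qed.

Lemma melon_coefIE :
  zhorner (N%:R : R) melon_coefI / (N%:R ^+ 3 * (12 * (N%:R - 1)) ^+ 4) = coefI R N.
Proof.
rewrite zhorner_mul /coefI /= /Zr /= /BinPos.Pos.to_nat /=.
by field; rewrite N0 N1.
Qed.

Lemma melon_coefIIE :
  zhorner (N%:R : R) melon_coefII / (N%:R ^+ 3 * (12 * (N%:R - 1)) ^+ 4) = coefII R N.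
Proof.
rewrite zhorner_mul /coefII /= /Zr /= /BinPos.Pos.to_nat /=.
by field; rewrite N0 N1.
Qed.

Lemma fM_coef : coefI R N *+ 2 + coefII R N *+ 4 = fM R N.
Proof. by rewrite /coefI /coefII /fM /=; field; rewrite N0 N1. Qed.

End Coefficients.

(** * Asymptotics of f_M *)

Lemma fM_sub_inv12 (R : numFieldType) N :
  (N%:R : R) != 0 -> (N%:R : R) - 1 != 0 ->
  fM R N - 12^-1 = - ((5 * N%:R ^+ 3 + 4 * N%:R ^+ 2 - 21 * N%:R - 42)
                       / (12 * N%:R ^+ 3 * (N%:R - 1) ^+ 2)).
Proof. by move=> N0 N1; rewrite /fM /=; field; rewrite N0 N1. Qed.

Lemma fM_near_inv12 (R : realFieldType) N : (3 <= N)%N ->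
  `|fM R N - 12^-1| <= ((N%:R : R) - 1)^-1.
Proof.
move=> N3; have n3 : 3 <= (N%:R : R) by rewrite (ler_nat R 3 N).
rewrite fM_sub_inv12; [|by apply/eqP; lra|by apply/eqP; lra].
set n : R := N%:R in n3 *.
have n1_gt0 : 0 < n - 1 by lra.
have den_gt0 : 0 < 12 * n ^+ 3 * (n - 1) ^+ 2.
  by rewrite !pmulr_rgt0 ?exprn_gt0 //; lra.
have n2 : 9 <= n ^+ 2 by rewrite expr2; nra.
have n3' : 27 <= n ^+ 3 by rewrite exprS; nra.
rewrite normrN ger0_norm; last by rewrite divr_ge0 ?ltW //; nra.
rewrite ler_pdivrMr // (_ : _^-1 * _ = 12 * n ^+ 3 * (n - 1)); last first.
  by field; apply/eqP; lra.
by rewrite exprS; nra.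
Qed.

Lemma fM_limit (R : archiRealFieldType) (eps : R) : 0 < eps ->
  exists M : nat, forall N : nat, (M <= N)%N -> `|fM R N - 12^-1| < eps.
Proof.
move=> eps_gt0; exists (Num.bound eps^-1).+3 => N MN.
have N3 : (3 <= N)%N by apply: leq_trans MN; rewrite !ltnS.
apply: le_lt_trans (fM_near_inv12 R N3) _.
have b_gt : eps^-1 < (Num.bound eps^-1)%:R by apply: archi_boundP; rewrite invr_ge0 ltW.
have b_le : (Num.bound eps^-1)%:R + 2 <= (N%:R : R) - 1.
  by rewrite lerBrDr -addrA -(natrD R 2 1) -natrD ler_nat addnC.
have b_ge0 : 0 <= (Num.bound eps^-1)%:R :> R := ler0n _ _.
rewrite -[eps]invrK ltf_pV2 ?posrE ?invr_gt0 //; lra.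
Qed.

(** * Permutations of the three legs *)

Lemma ord3_cases (i : 'I_3) : [\/ i = legB, i = legC | i = legD].
Proof.
by case: i => [[|[|[|//]]] Hk]; [apply: Or31|apply: Or32|apply: Or33]; exact: val_inj.
Qed.

Lemma tperm_legBD_neq1 : tperm legB legD != 1%g.
Proof. by apply/eqP => /permP /(_ legB); rewrite tpermL perm1. Qed.

Lemma perm3_images (s : 'S_3) : s <> 1%g -> s <> tperm legB legD ->
  ((s legB : nat), (s legC : nat), (s legD : nat))
    \in [:: (0, 2, 1); (1, 0, 2); (1, 2, 0); (2, 0, 1)]%N.
Proof.
move=> s1 st.
suff: [&& s legB != s legC, s legB != s legD & s legC != s legD] ==>
      (((s legB : nat), (s legC : nat), (s legD : nat))
         \in [:: (0, 2, 1); (1, 0, 2); (1, 2, 0); (2, 0, 1)]%N).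
  by move/implyP; apply; rewrite !(inj_eq perm_inj).
case: (ord3_cases (s legB)) => EB; case: (ord3_cases (s legC)) => EC;
  case: (ord3_cases (s legD)) => ED; rewrite EB EC ED //.
- by case: s1; apply/permP => i; rewrite perm1; case: (ord3_cases i) => ->.
- by case: st; apply/permP => i; case: (ord3_cases i) => ->;
    rewrite ?tpermL ?tpermR ?tpermD.
Qed.

Lemma sum_perm3 (V : nmodType) (F : 'S_3 -> V) (a b : V) :
  (forall s, s = 1%g \/ s = tperm legB legD -> F s = a) ->
  (forall s, s <> 1%g -> s <> tperm legB legD -> F s = b) ->
  \sum_(s : 'S_3) F s = a *+ 2 + b *+ 4.
Proof.
move=> Fa Fb; have t1 := tperm_legBD_neq1.
rewrite (bigD1 1%g) //= (bigD1 (tperm legB legD)) //= Fa ?Fa; [|by right|by left].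
rewrite (eq_bigr (fun=> b)) => [|s /andP[/eqP st /eqP s1]]; last exact: Fb.
rewrite sumr_const addrA -mulr2n; congr (_ + _ *+ _).
have c1 := cardD1 (1%g : 'S_3) 'S_3.
have c2 := cardD1 (tperm legB legD) [predD1 'S_3 & 1%g].
rewrite card_Sn inE in c1; rewrite !inE t1 in c2.
rewrite (@eq_card _ _ [predD1 [predD1 'S_3 & 1%g] & tperm legB legD]) => [|s]; last first.
  by rewrite !inE andbT andbC.
by move: c1; rewrite c2 !add1n => -[].
Qed.

Unset Implicit Arguments.

Theorem mainTheorem5 (R : archiRealFieldType) :
  (forall (N : nat), (3 <= N)%N -> forall (lam : R),
    (forall (s : 'S_3) (x y : midx N),
        (s = 1%g \/ s = tperm legB legD) ->
        melonA lam s x y = lam ^+ 2 * coefI R N * Pker R x y)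
    /\ (forall (s : 'S_3) (x y : midx N),
        s <> 1%g -> s <> tperm legB legD ->
        melonA lam s x y = lam ^+ 2 * coefII R N * Pker R x y)
    /\ (forall (x y : midx N),
        \sum_(s : 'S_3) melonA lam s x y = lam ^+ 2 * fM R N * Pker R x y))
  /\ (forall eps : R, 0 < eps ->
        exists M : nat, forall N : nat, (M <= N)%N -> `|fM R N - 12^-1| < eps).
Proof.
split=> [N N3 lam|]; last exact: fM_limit.
have N0 : (N%:R : R) != 0 by rewrite pnatr_eq0 -lt0n (leq_trans _ N3).
have N1 : (N%:R : R) - 1 != 0 by rewrite subr_eq0 pnatr_eq1 gtn_eqF // (leq_trans _ N3).
have melonI s (x y : midx N) : s = 1%g \/ s = tperm legB legD ->
    melonA lam s x y = lam ^+ 2 * coefI R N * Pker R x y.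
  rewrite -melon_coefIE //; case=> ->; apply: (melonA_target N0 N1).
  - by rewrite !perm1; exact: melon_dexpr_012.
  - by rewrite tpermL tpermD // tpermR; exact: melon_dexpr_210.
have melonII s (x y : midx N) : s <> 1%g -> s <> tperm legB legD ->
    melonA lam s x y = lam ^+ 2 * coefII R N * Pker R x y.
  move=> s1 st; rewrite -melon_coefIIE //; apply: (melonA_target N0 N1).
  have := perm3_images s1 st; rewrite !inE => /or4P[] /eqP[-> -> ->];
    [exact: melon_dexpr_021|exact: melon_dexpr_102|exact: melon_dexpr_120|exact: melon_dexpr_201].
do 2!split=> //; move=> x y.
rewrite (sum_perm3 (fun s => melonI s x y) (fun s => melonII s x y)) -fM_coef //.
by ring.
Qed.
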